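(* Let $Q\in(0,1/2)$, $\sigma>0$ and $\beta\in(0,1)$, and define $\pi^B(\beta)=\frac{(1-2Q)\sigma}{1+\sigma}+2Q\beta$, $\Delta_O^B(\beta)=\frac{\beta Q(\sigma+1)-2Q\sigma+\sigma}{2\beta Q(\sigma+1)-2Q\sigma+\sigma}-\frac{(1-2Q)\sigma}{1+\sigma}-Q$, $V(\beta)=\pi^B(\beta)\Delta_O^B(\beta)=(1-2Q)\frac{\sigma+Q\left(\beta-\sigma+\sigma^2(1-\beta)\right)}{(\sigma+1)^2}$. Then (i) $\pi^B$ is strictly increasing and $\Delta_O^B$ is strictly decreasing in $\beta$; (ii) $\frac{\partial^2V}{\partial\beta\,\partial\sigma}<0$, and $V'(\beta)>0$ if $\sigma<1$, $V'(\beta)=0$ if $\sigma=1$, $V'(\beta)<0$ if $\sigma>1$.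
   Context: Interpretation (not needed for the claim): in a model with a symmetric type distribution $F$ on $[-1/2,1/2]$, recommendation threshold $R$, $\beta=F(1/2-R)$, prior probabilities $q_H,q_1,q_2,q_L$ of product versions $(1,1),(1,0),(0,1),(0,0)$, $Q=(q_1+q_2)/2$ and $\sigma=q_H/q_L$, the quantities $\pi^B$, $\Delta_O^B$ and $V$ are the probability of a buy recommendation, the objective effect of a buy recommendation, and the value of the recommendation system. *)

From Stdlib Require Import Reals.
From Coquelicot Require Import Coquelicot.
Open Scope R_scope.

Definition piB (Q sigma beta : R) : R :=
  (1 - 2 * Q) * sigma / (1 + sigma) + 2 * Q * beta.

Definition DeltaOB (Q sigma beta : R) : R :=
  (beta * Q * (sigma + 1) - 2 * Q * sigma + sigma)
    / (2 * beta * Q * (sigma + 1) - 2 * Q * sigma + sigma)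
  - (1 - 2 * Q) * sigma / (1 + sigma) - Q.

Definition V (Q sigma beta : R) : R := piB Q sigma beta * DeltaOB Q sigma beta.

From Stdlib Require Import Reals Lra Psatz.
From Coquelicot Require Import Coquelicot.
Open Scope R_scope.

(* For [beta >= 0] both denominators in [V] are positive, and [V] collapses to
   a function that is affine in [beta], with slope
   [(1 - 2Q) Q (1 - sigma) / (1 + sigma)].  The slope has the sign of
   [1 - sigma], and its derivative in [sigma], [-2 (1 - 2Q) Q / (1 + sigma)^2],
   is negative.  Monotonicity of [DeltaOB] reduces to that of
   [(a beta + c) / (2 a beta + c)] with [a, c > 0], which decreases because the
   cross-multiplied difference is [a c (beta2 - beta1)]. *)

Lemma affine_ratio_decreasing (a c x y : R) :
  0 < a -> 0 < c -> 0 <= x -> x < y ->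
  (a * y + c) / (2 * a * y + c) < (a * x + c) / (2 * a * x + c).
Proof.
  intros ha hc hx hxy.
  assert (hDx : 0 < 2 * a * x + c) by nra.
  assert (hDy : 0 < 2 * a * y + c) by nra.
  apply Rlt_0_minus.
  replace ((a * x + c) / (2 * a * x + c) - (a * y + c) / (2 * a * y + c))
    with (a * c * (y - x) / ((2 * a * x + c) * (2 * a * y + c))) by (field; split; lra).
  apply Rdiv_lt_0_compat; repeat apply Rmult_lt_0_compat; lra.
Qed.

Definition V_closed (Q s b : R) : R :=
  (1 - 2 * Q) * (s + Q * (b - s + s ^ 2 * (1 - b))) / (s + 1) ^ 2.

Definition V_slope (Q s : R) : R := (1 - 2 * Q) * Q * (1 - s) / (1 + s).

Lemma is_derive_V_closed (Q s b : R) : 0 < s ->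
  is_derive (V_closed Q s) b (V_slope Q s).
Proof. intros hs. unfold V_closed, V_slope. auto_derive; [trivial | field; lra]. Qed.

Lemma is_derive_V_slope (Q s : R) : 0 < s ->
  is_derive (V_slope Q) s (- 2 * (1 - 2 * Q) * Q / (1 + s) ^ 2).
Proof. intros hs. unfold V_slope. auto_derive; [lra | field; lra]. Qed.

Section Recommendation.

Variable Q : R.
Hypothesis hQ : 0 < Q < 1/2.

Lemma DeltaOB_share (s b : R) :
  DeltaOB Q s b
  = (Q * (s + 1) * b + s * (1 - 2 * Q)) / (2 * (Q * (s + 1)) * b + s * (1 - 2 * Q))
    - (1 - 2 * Q) * s / (1 + s) - Q.
Proof. unfold DeltaOB. do 2 f_equal. f_equal; ring. Qed.

Lemma piB_increasing (s b1 b2 : R) : b1 < b2 -> piB Q s b1 < piB Q s b2.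
Proof. intros h. unfold piB. nra. Qed.

Lemma DeltaOB_decreasing (s b1 b2 : R) : 0 < s -> 0 <= b1 -> b1 < b2 ->
  DeltaOB Q s b2 < DeltaOB Q s b1.
Proof.
  intros hs hb1 h12. rewrite !DeltaOB_share.
  apply Rplus_lt_compat_r, Rplus_lt_compat_r, affine_ratio_decreasing; nra.
Qed.

Lemma V_closed_form (s b : R) : 0 < s -> 0 <= b -> V Q s b = V_closed Q s b.
Proof.
  intros hs hb. unfold V, piB, DeltaOB, V_closed.
  assert (0 <= b * Q * (s + 1)) by (repeat apply Rmult_le_pos; lra).
  assert (0 < s * (1 - 2 * Q)) by (apply Rmult_lt_0_compat; lra).
  field; split; lra.
Qed.

Lemma is_derive_V (s b : R) : 0 < s -> 0 < b -> is_derive (V Q s) b (V_slope Q s).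
Proof.
  intros hs hb. apply is_derive_ext_loc with (f := V_closed Q s).
  - apply filter_imp with (P := fun t => 0 < t); [|exact (open_gt 0 b hb)].
    intros t ht. symmetry. apply V_closed_form; lra.
  - exact (is_derive_V_closed Q s b hs).
Qed.

Lemma Derive_V (s b : R) : 0 < s -> 0 < b -> Derive (V Q s) b = V_slope Q s.
Proof. intros hs hb. exact (is_derive_unique _ _ _ (is_derive_V s b hs hb)). Qed.

Lemma is_derive_Derive_V (s b : R) : 0 < s -> 0 < b ->
  is_derive (fun s' => Derive (V Q s') b) s (- 2 * (1 - 2 * Q) * Q / (1 + s) ^ 2).
Proof.
  intros hs hb. apply is_derive_ext_loc with (f := V_slope Q).
  - apply filter_imp with (P := fun t => 0 < t); [|exact (open_gt 0 s hs)].
    intros t ht. symmetry. exact (Derive_V t b ht hb).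
  - exact (is_derive_V_slope Q s hs).
Qed.

Lemma V_slope_pos (s : R) : 0 < s -> s < 1 -> 0 < V_slope Q s.
Proof.
  intros hs h1. unfold V_slope.
  apply Rdiv_lt_0_compat; [repeat apply Rmult_lt_0_compat | ]; lra.
Qed.

Lemma V_slope_1 : V_slope Q 1 = 0.
Proof. unfold V_slope. field. Qed.

Lemma V_slope_neg (s : R) : 1 < s -> V_slope Q s < 0.
Proof.
  intros h1. unfold V_slope.
  assert (0 < (1 - 2 * Q) * Q * (s - 1)) by (repeat apply Rmult_lt_0_compat; lra).
  apply Rdiv_neg_pos; lra.
Qed.

End Recommendation.

Theorem lemma2 (Q sigma : R) (hQ : 0 < Q < 1/2) (hs : 0 < sigma) :
  (* closed form of V *)
  (forall beta, 0 < beta < 1 ->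
     V Q sigma beta
     = (1 - 2 * Q) * (sigma + Q * (beta - sigma + sigma ^ 2 * (1 - beta)))
         / (sigma + 1) ^ 2) /\
  (* (i) piB strictly increasing, DeltaOB strictly decreasing in beta on (0,1) *)
  (forall b1 b2, 0 < b1 -> b1 < b2 -> b2 < 1 ->
     piB Q sigma b1 < piB Q sigma b2 /\ DeltaOB Q sigma b2 < DeltaOB Q sigma b1) /\
  (* (ii) cross partial derivative d^2 V / (d beta d sigma) < 0 *)
  (forall beta, 0 < beta < 1 ->
     ex_derive (fun s => Derive (fun b => V Q s b) beta) sigma /\
     Derive (fun s => Derive (fun b => V Q s b) beta) sigma < 0) /\
  (* (ii) sign of V'(beta) according to sigma vs 1 *)
  (forall beta, 0 < beta < 1 ->
     ex_derive (V Q sigma) beta /\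
     (sigma < 1 -> Derive (V Q sigma) beta > 0) /\
     (sigma = 1 -> Derive (V Q sigma) beta = 0) /\
     (sigma > 1 -> Derive (V Q sigma) beta < 0)).
Proof.
  split; [|split; [|split]].
  - intros beta hb. apply V_closed_form; lra.
  - intros b1 b2 h1 h12 h2. split.
    + apply piB_increasing; lra.
    + apply DeltaOB_decreasing; lra.
  - intros beta [hb _].
    pose proof (is_derive_Derive_V Q hQ sigma beta hs hb) as hcross.
    split; [eexists; exact hcross|].
    erewrite is_derive_unique; [|exact hcross].
    assert (0 < (1 + sigma) ^ 2) by (apply pow_lt; lra).
    apply Rdiv_neg_pos; nra.
  - intros beta [hb _].
    rewrite (Derive_V Q hQ sigma beta hs hb).
    split; [eexists; exact (is_derive_V Q hQ sigma beta hs hb)|].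
    split; [|split].
    + intros h. exact (V_slope_pos Q hQ sigma hs h).
    + intros ->. exact (V_slope_1 Q).
    + intros h. exact (V_slope_neg Q hQ sigma h).
Qed.
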